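(* Let $\widehat\Sigma$ be an integral $\mathbb Q$-affine polyhedral complex with support $\mathbb R^N$ admitting a strictly convex function $\widehat H\in\operatorname{Rat}(\widehat\Sigma)$, and let $\Sigma'$ be a subcomplex of $\widehat\Sigma$. Then every facewise affine function $F$ on $\widehat\Sigma$ can be written as $F=H_1-H_2$ with $H_1,H_2$ strictly convex facewise affine functions on $\widehat\Sigma$. Moreover, if the restriction of $F$ to $|\Sigma'|$ belongs to $\operatorname{Rat}(\Sigma')$, then $H_1,H_2$ can be chosen with restrictions to $|\Sigma'|$ belonging to $\operatorname{Rat}(\Sigma')$.
   Context: An integral $\mathbb Q$-affine polyhedral complex in $\mathbb R^N$ is a finite collection of polyhedra $\{u:L_i(u)\ge0\}$ with $L_i(u)=\langle m_i,u\rangle+\gamma_i$, $m_i\in\mathbb Z^N$, $\gamma_i\in\mathbb Q$, closed under faces, any two meeting in a common face. A function on $|\Sigma|$ is facewise (integral $\mathbb Q$-)affine if its restriction to each cell is the restriction of an (integral $\mathbb Q$-)affine function on $\mathbb R^N$. $\operatorname{Rat}(\Sigma)$ is the set of $\infty$ and facewise integral $\mathbb Q$-affine functions on $\Sigma$ having the same slope near infinity along any two parallel rays (unbounded one-dimensional cells with the same direction) of $\Sigma$. A facewise affine $H$ is convex if for each cell $\sigma$ there is an affine $L_\sigma$ on $\mathbb R^N$ with $H=L_\sigma$ on $\sigma$ and $H-L_\sigma\ge0$ on $\eta\setminus\sigma$ for every cell $\eta\supseteq\sigma$; strictly convex if these inequalities are strict. *)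

From HB Require Import structures.
From mathcomp Require Import all_boot all_order all_algebra.
From mathcomp Require Export reals.
Set Implicit Arguments. Unset Strict Implicit. Unset Printing Implicit Defensive.
Import Order.TTheory GRing.Theory Num.Theory.
Local Open Scope ring_scope.

Section PolyComplex.
Variables (R : realType) (N : nat).

Definition pt := 'rV[R]_N.

Definition iaff := ('rV[int]_N * rat)%type.
Definition iaff_eval (L : iaff) (u : pt) : R :=
  \sum_(i < N) (L.1 0 i)%:~R * u 0 i + ratr L.2.

Definition aff_eval (a : pt) (b : R) (u : pt) : R :=
  \sum_(i < N) a 0 i * u 0 i + b.

Definition polyhedron := seq iaff.
Definition poly_set (P : polyhedron) : pt -> Prop :=
  fun u => forall L, L \in P -> 0 <= iaff_eval L u.

Definition is_face (F P : pt -> Prop) : Prop :=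
  (exists u, F u) /\
  exists (a : pt) (b : R), (forall u, P u -> 0 <= aff_eval a b u) /\
    (forall u, F u <-> (P u /\ aff_eval a b u = 0)).

Definition complex := seq polyhedron.

Definition is_cell (S : complex) (C : pt -> Prop) : Prop :=
  exists2 P, P \in S & forall u, C u <-> poly_set P u.

Definition is_complex (S : complex) : Prop :=
  [/\ (forall P, P \in S -> exists u, poly_set P u),
      (forall P, P \in S -> forall F, is_face F (poly_set P) -> is_cell S F) &
      (forall P Q, P \in S -> Q \in S ->
         (forall u, ~ (poly_set P u /\ poly_set Q u)) \/
         (is_face (fun u => poly_set P u /\ poly_set Q u) (poly_set P) /\
          is_face (fun u => poly_set P u /\ poly_set Q u) (poly_set Q)))].

Definition full_support (S : complex) : Prop :=
  forall u : pt, exists2 P, P \in S & poly_set P u.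

Definition subcomplex (S' S : complex) : Prop :=
  is_complex S' /\ forall P, P \in S' -> is_cell S (poly_set P).

Definition facewise_affine (S : complex) (H : pt -> R) : Prop :=
  forall P, P \in S -> exists (a : pt) (b : R),
    forall u, poly_set P u -> H u = aff_eval a b u.

Definition facewise_iaffine (S : complex) (H : pt -> R) : Prop :=
  forall P, P \in S -> exists L : iaff,
    forall u, poly_set P u -> H u = iaff_eval L u.

Definition one_dim (C : pt -> Prop) : Prop :=
  exists (p w : pt), forall u, C u -> exists t : R, u = p + t *: w.

Definition ray_in (C : pt -> Prop) (p v : pt) : Prop :=
  v != 0 /\ forall t : R, 0 <= t -> C (p + t *: v).

Definition parallel_slopes (S : complex) (H : pt -> R) : Prop :=
  forall P Q, P \in S -> Q \in S ->
    one_dim (poly_set P) -> one_dim (poly_set Q) ->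
    forall p q v : pt, ray_in (poly_set P) p v -> ray_in (poly_set Q) q v ->
      H (p + v) - H p = H (q + v) - H q.

(* finite elements of Rat(S) *)
Definition in_Rat (S : complex) (H : pt -> R) : Prop :=
  facewise_iaffine S H /\ parallel_slopes S H.

Definition strictly_convex (S : complex) (H : pt -> R) : Prop :=
  facewise_affine S H /\
  forall P, P \in S -> exists (a : pt) (b : R),
    (forall u, poly_set P u -> H u = aff_eval a b u) /\
    (forall Q, Q \in S -> (forall u, poly_set P u -> poly_set Q u) ->
       forall u, poly_set Q u -> ~ poly_set P u -> 0 < H u - aff_eval a b u).

End PolyComplex.

From mathcomp Require Import all_boot all_order all_algebra.
From mathcomp Require Import ring.
From Stdlib Require Import Classical.
Import Order.TTheory GRing.Theory Num.Theory.
Set Implicit Arguments.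
Unset Strict Implicit.
Unset Printing Implicit Defensive.

Local Open Scope ring_scope.

(* Adding a large integer multiple K of the strictly convex function Hh to F makes it
   strictly convex, so F = (F + K Hh) - K Hh.  Strict convexity at a cell P is tested on
   each cell Q containing P: there g := Hh|_Q - L_P is affine, nonnegative on Q and zero
   exactly on P, while f := F|_Q - F|_P vanishes on P.  Farkas' lemma, applied to the cone
   over Q cut by g <= 0 (on which f vanishes), gives f + k g >= 0 on Q for some k, hence
   f + K g > 0 on Q \ P for every K > k.  Since K is an integer, integral slopes and
   equal slopes on parallel rays survive, so Rat(S') is preserved. *)

Section Farkas.
Variables (R : realFieldType) (V : lmodType R).
Implicit Types (phi psi : V -> R) (x y : V).

Lemma scalar_fun0 phi : scalar phi -> phi 0 = 0.
Proof.
move=> lin_phi; have := lin_phi 1 0 0; rewrite scaler0 addr0 mul1r.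
by rewrite -{1}[phi 0]addr0 => /addrI <-.
Qed.

Lemma scalar_funD phi x y : scalar phi -> phi (x + y) = phi x + phi y.
Proof. by move=> lin_phi; rewrite -[x]scale1r lin_phi mul1r scale1r. Qed.

Lemma scalar_funZ phi k x : scalar phi -> phi (k *: x) = k * phi x.
Proof. by move=> lin_phi; rewrite -[k *: x]addr0 lin_phi scalar_fun0 ?addr0. Qed.

Lemma scalar_fun_subZ phi psi c :
  scalar phi -> scalar psi -> scalar (fun x => phi x - c * psi x).
Proof. by move=> lin_phi lin_psi k x y; rewrite lin_phi lin_psi; ring. Qed.

Lemma nonneg_scalar_eq0 phi : scalar phi -> (forall x, 0 <= phi x) -> forall x, phi x = 0.
Proof.
move=> lin_phi phi_ge0 x; apply/le_anti; rewrite phi_ge0 andbT.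
by rewrite -oppr_ge0 -mulN1r -scalar_funZ // scaleN1r.
Qed.

Section Elimination.
Variables (m : nat) (a : nat -> V -> R) (h : V -> R) (x0 : V).
Hypotheses (lin_a : forall i, scalar (a i)) (lin_h : scalar h).
Hypothesis h_cone : forall x, (forall i, (i < m.+1)%N -> 0 <= a i x) -> 0 <= h x.
Hypotheses (a_x0 : forall i, (i < m)%N -> 0 <= a i x0) (h_x0 : h x0 < 0).

Lemma last_form_neg : a m x0 < 0.
Proof.
rewrite ltNge; apply/negP => am_x0; move: h_x0; rewrite ltNge h_cone //.
by move=> i; rewrite ltnS leq_eqVlt => /orP[/eqP-> | /a_x0].
Qed.

(* Fourier-Motzkin elimination of the last constraint along [x0]. *)
Definition elim_last phi x := phi x - phi x0 / a m x0 * a m x.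

Lemma elim_lastE phi x : scalar phi ->
  elim_last phi x = phi (x - (a m x / a m x0) *: x0).
Proof.
by move=> lin_phi; rewrite /elim_last scalar_funD // -scaleNr scalar_funZ //; ring.
Qed.

Lemma scalar_elim_last phi : scalar phi -> scalar (elim_last phi).
Proof. by move=> lin_phi; apply: scalar_fun_subZ. Qed.

Lemma elim_last_cone x :
  (forall i, (i < m)%N -> 0 <= elim_last (a i) x) -> 0 <= elim_last h x.
Proof.
move=> a'_x; rewrite elim_lastE // h_cone // => i.
rewrite ltnS leq_eqVlt => /orP[/eqP-> | /a'_x]; last by rewrite elim_lastE.
rewrite -elim_lastE // /elim_last divff ?mul1r ?subrr //.
by rewrite lt_eqF // last_form_neg.
Qed.

Lemma elim_last_lift (c : nat -> R) : (forall i, 0 <= c i) ->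
  (forall x, elim_last h x = \sum_(i < m) c i * elim_last (a i) x) ->
  exists c' : nat -> R, (forall i, 0 <= c' i) /\
    forall x, h x = \sum_(i < m.+1) c' i * a i x.
Proof.
move=> c_ge0 hc; have am_x0 := last_form_neg.
pose mu := (h x0 - \sum_(i < m) c i * a i x0) / a m x0.
have mu_ge0 : 0 <= mu.
  rewrite /mu ler_ndivlMr // mul0r subr_le0 (le_trans (ltW h_x0)) //.
  by apply: sumr_ge0 => i _; apply: mulr_ge0 => //; apply: a_x0.
exists (fun i => if i == m then mu else c i); split=> [i | x]; first by case: ifP.
rewrite big_ord_recr /= eqxx.
rewrite (eq_bigr (fun i : 'I_m => c i * a i x)); last by move=> i _; rewrite ltn_eqF.
have sum_elim : \sum_(i < m) c i * elim_last (a i) x =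
    \sum_(i < m) c i * a i x - (\sum_(i < m) c i * a i x0) / a m x0 * a m x.
  by rewrite !mulr_suml -sumrB; apply: eq_bigr => i _; rewrite /elim_last; ring.
have := hc x; rewrite sum_elim /elim_last /mu => hx.
by rewrite -[h x](subrK (h x0 / a m x0 * a m x)) hx; ring.
Qed.

End Elimination.

Theorem farkas m (a : nat -> V -> R) (h : V -> R) :
  (forall i, scalar (a i)) -> scalar h ->
  (forall x, (forall i, (i < m)%N -> 0 <= a i x) -> 0 <= h x) ->
  exists c : nat -> R, (forall i, 0 <= c i) /\
    forall x, h x = \sum_(i < m) c i * a i x.
Proof.
elim: m => [|m IH] in a h * => lin_a lin_h h_cone.
  exists (fun=> 0); split=> // x; rewrite big_ord0.
  by apply: nonneg_scalar_eq0 => // y; apply: h_cone.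
have [h_cone_m | ] :=
  classic (forall x, (forall i, (i < m)%N -> 0 <= a i x) -> 0 <= h x).
  have [c [c_ge0 hc]] := IH a h lin_a lin_h h_cone_m.
  exists (fun i => if i == m then 0 else c i); split=> [i | x]; first by case: ifP.
  rewrite big_ord_recr /= eqxx mul0r addr0 hc.
  by apply: eq_bigr => i _; rewrite ltn_eqF.
move=> /not_all_ex_not[x0 x0_violates].
have [a_x0 h_x0_ge0] := imply_to_and _ _ x0_violates.
have h_x0 : h x0 < 0 by rewrite ltNge; apply/negP.
have [c [c_ge0 hc]] := IH _ _ (fun i => scalar_elim_last m x0 lin_a (lin_a i))
  (scalar_elim_last m x0 lin_a lin_h) (elim_last_cone lin_a lin_h h_cone a_x0 h_x0).
exact: (elim_last_lift h_cone a_x0 h_x0 c_ge0 hc).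
Qed.

End Farkas.

Section Homogenization.
Variables (R : realType) (N : nat).
Local Notation pt := (pt R N).
Local Notation V := ('rV[R]_N * R^o)%type.

Definition hom_eval (a : pt) (b : R) (z : V) : R :=
  \sum_i a 0 i * z.1 0 i + b * z.2.

Lemma scalar_hom_eval a b : scalar (hom_eval a b).
Proof.
move=> k x y; rewrite /hom_eval /=.
under eq_bigr do rewrite !mxE mulrDr mulrCA.
by rewrite big_split /= -mulr_sumr; change (k *: x.2) with (k * x.2); ring.
Qed.

Lemma aff_eval_hom a b u : aff_eval a b u = hom_eval a b (u, 1).
Proof. by rewrite /aff_eval /hom_eval mulr1. Qed.

Definition iaff_coef (L : iaff N) : pt := map_mx intr L.1.

Lemma iaff_evalE (L : iaff N) u :
  iaff_eval L u = aff_eval (iaff_coef L) (ratr L.2) u.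
Proof.
by rewrite /iaff_eval /aff_eval; congr (_ + _); apply: eq_bigr => i _; rewrite mxE.
Qed.

Lemma scalar_dehomogenize (phi : V -> R) (p u : pt) (t : R) :
  scalar phi -> 0 <= t ->
  phi (u, t) + phi (p, 1) = (1 + t) * phi ((1 + t)^-1 *: (u + p), 1).
Proof.
move=> lin_phi t_ge0; have t1_neq0 : 1 + t != 0 by rewrite gt_eqF // ltr_wpDr.
rewrite -(scalar_funD _ _ lin_phi) -(scalar_funZ _ _ lin_phi); congr phi.
rewrite /GRing.scale /= /GRing.add /=; congr pair.
  by rewrite scalerA mulfV // scale1r.
by rewrite /GRing.scale /= mulr1 addrC.
Qed.

Section PolyhedronDomination.
Variables (Q : polyhedron N) (af ag : pt) (bf bg : R) (p0 : pt).
Local Notation f := (aff_eval af bf).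
Local Notation g := (aff_eval ag bg).
Hypotheses (Q_p0 : poly_set Q p0) (g_p0 : g p0 = 0).
Hypothesis g_ge0 : forall u, poly_set Q u -> 0 <= g u.
Hypothesis f_eq0 : forall u, poly_set Q u -> g u = 0 -> f u = 0.

(* The cone over [Q], cut by [g <= 0]: [-g], then [t >= 0], then the constraints of [Q]. *)
Definition cone_constraint (i : nat) : V -> R :=
  match i with
  | 0 => fun z => - hom_eval ag bg z
  | 1 => fun z => z.2
  | j.+2 => let L := nth (0, 0) Q j in hom_eval (iaff_coef L) (ratr L.2)
  end.

Lemma scalar_cone_constraint i : scalar (cone_constraint i).
Proof.
case: i => [|[|j]] /=; last exact: scalar_hom_eval.
  by move=> k x y; rewrite scalar_hom_eval; ring.
by [].
Qed.

Lemma hom_f_eq0_on_cone (u : pt) (t : R) :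
  (forall i, (i < (size Q).+2)%N -> 0 <= cone_constraint i (u, t)) ->
  hom_eval af bf (u, t) = 0.
Proof.
move=> in_cone; have t_ge0 : 0 <= t := in_cone 1%N erefl.
have t1_gt0 : 0 < 1 + t by rewrite ltr_wpDr.
set x := (1 + t)^-1 *: (u + p0).
have Q_x : poly_set Q x.
  move=> L QL; rewrite iaff_evalE aff_eval_hom -(pmulr_rge0 _ t1_gt0).
  rewrite -(scalar_dehomogenize _ _ (scalar_hom_eval _ _) t_ge0).
  rewrite -aff_eval_hom -iaff_evalE addr_ge0 ?Q_p0 //.
  by have := in_cone (index L Q).+2; rewrite /= !ltnS index_mem nth_index //; apply.
have g_x : g x = 0.
  apply/le_anti; rewrite g_ge0 // andbT aff_eval_hom -(pmulr_rle0 _ t1_gt0).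
  rewrite -(scalar_dehomogenize _ _ (scalar_hom_eval _ _) t_ge0).
  rewrite -aff_eval_hom g_p0 addr0.
  by rewrite -oppr_ge0; apply: (in_cone 0%N).
have := scalar_dehomogenize p0 u (scalar_hom_eval af bf) t_ge0.
by rewrite -!aff_eval_hom -/x f_eq0 // f_eq0 // addr0 mulr0.
Qed.

Lemma polyhedron_domination :
  exists k, forall u, poly_set Q u -> 0 <= f u + k * g u.
Proof.
have f_cone z : (forall i, (i < (size Q).+2)%N -> 0 <= cone_constraint i z) ->
    0 <= hom_eval af bf z.
  by case: z => u t /hom_f_eq0_on_cone ->.
have [c [c_ge0 f_comb]] := farkas scalar_cone_constraint (scalar_hom_eval af bf) f_cone.
exists (c 0%N) => u Q_u; rewrite aff_eval_hom f_comb big_ord_recl /= -aff_eval_hom.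
rewrite mulrN addrAC addNr add0r; apply: sumr_ge0 => -[[|j] lt_j] _ /=.
  by rewrite mulr1 c_ge0.
by rewrite -aff_eval_hom -iaff_evalE mulr_ge0 // Q_u // mem_nth.
Qed.

End PolyhedronDomination.

End Homogenization.

Definition eventually (P : nat -> Prop) := exists n, forall K, (n <= K)%N -> P K.

Lemma eventually_and (P1 P2 : nat -> Prop) :
  eventually P1 -> eventually P2 -> eventually (fun K => P1 K /\ P2 K).
Proof.
move=> [n1 P1_n1] [n2 P2_n2]; exists (maxn n1 n2) => K.
by rewrite geq_max => /andP[le1 le2]; split; [apply: P1_n1 | apply: P2_n2].
Qed.

Lemma eventually_all_in (T : eqType) (s : seq T) (P : T -> nat -> Prop) :
  (forall x, x \in s -> eventually (P x)) ->
  eventually (fun K => forall x, x \in s -> P x K).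
Proof.
elim: s => [|y s IH] ev_P; first by exists 0%N.
have ev_s : eventually (fun K => forall x, x \in s -> P x K).
  by apply: IH => x s_x; apply: ev_P; rewrite in_cons s_x orbT.
have [n ev_n] := eventually_and (ev_P y (mem_head y s)) ev_s.
exists n => K le_nK x; rewrite in_cons => /orP[/eqP-> | s_x].
  by case: (ev_n K le_nK).
by case: (ev_n K le_nK) => _; apply.
Qed.

Lemma eventually_gtr_nat (R : archiRealFieldType) (k : R) :
  eventually (fun K => k < K%:R).
Proof.
exists (Num.Def.archi_bound `|k|) => K le_bound_K.
apply: le_lt_trans (ler_norm k) _; apply: lt_le_trans (archi_boundP (normr_ge0 k)) _.
by rewrite ler_nat.
Qed.

Section StrictConvexity.
Variables (R : realType) (N : nat).
Local Notation pt := (pt R N).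

Lemma aff_evalDZ (a1 a2 : pt) (b1 b2 k : R) u :
  aff_eval (a1 + k *: a2) (b1 + k * b2) u = aff_eval a1 b1 u + k * aff_eval a2 b2 u.
Proof.
rewrite /aff_eval (eq_bigr (fun i => a1 0 i * u 0 i + k * (a2 0 i * u 0 i))).
  by rewrite big_split /= -mulr_sumr; ring.
by move=> i _; rewrite !mxE; ring.
Qed.

Lemma aff_evalB (a1 a2 : pt) (b1 b2 : R) u :
  aff_eval (a1 - a2) (b1 - b2) u = aff_eval a1 b1 u - aff_eval a2 b2 u.
Proof. by have := aff_evalDZ a1 a2 b1 b2 (-1) u; rewrite scaleN1r !mulN1r. Qed.

Variables (S : complex N) (Hh F : pt -> R).
Hypothesis cells_nonempty : forall P, P \in S -> exists u : pt, poly_set P u.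
Hypotheses (Hh_sc : strictly_convex S Hh) (F_fa : facewise_affine S F).

Lemma eventually_strict_support_pair P Q (aF aH : pt) (bF bH : R) :
  P \in S -> Q \in S -> (forall u : pt, poly_set P u -> poly_set Q u) ->
  (forall u, poly_set P u -> F u = aff_eval aF bF u) ->
  (forall u, poly_set P u -> Hh u = aff_eval aH bH u) ->
  (forall u, poly_set Q u -> ~ poly_set P u -> 0 < Hh u - aff_eval aH bH u) ->
  eventually (fun K => forall u, poly_set Q u -> ~ poly_set P u ->
    0 < F u + K%:R * Hh u - aff_eval (aF + K%:R *: aH) (bF + K%:R * bH) u).
Proof.
move=> S_P S_Q sub_PQ F_P Hh_P Hh_Q_gt.
have [p0 P_p0] := cells_nonempty S_P.
have [aFQ [bFQ F_Q]] := F_fa S_Q; have [aHQ [bHQ Hh_Q]] := Hh_sc.1 Q S_Q.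
pose f := aff_eval (aFQ - aF) (bFQ - bF); pose g := aff_eval (aHQ - aH) (bHQ - bH).
have f_Q u : poly_set Q u -> f u = F u - aff_eval aF bF u.
  by move=> Q_u; rewrite /f aff_evalB F_Q.
have g_Q u : poly_set Q u -> g u = Hh u - aff_eval aH bH u.
  by move=> Q_u; rewrite /g aff_evalB Hh_Q.
have fg_P u : poly_set P u -> f u = 0 /\ g u = 0.
  by move=> P_u; have Q_u := sub_PQ u P_u; rewrite f_Q // g_Q // F_P // Hh_P // !subrr.
have g_gt0 u : poly_set Q u -> ~ poly_set P u -> 0 < g u.
  by move=> Q_u nP_u; rewrite g_Q // Hh_Q_gt.
have [k f_kg_ge0] : exists k, forall u, poly_set Q u -> 0 <= f u + k * g u.
  apply: (polyhedron_domination (p0 := p0)).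
  - exact: sub_PQ.
  - exact: (fg_P p0 P_p0).2.
  - move=> u Q_u; rewrite -/g.
    have [P_u | nP_u] := classic (poly_set P u); first by rewrite (fg_P u P_u).2.
    exact/ltW/g_gt0.
  - move=> u Q_u; rewrite -/f -/g => g_u.
    have [P_u | nP_u] := classic (poly_set P u).
      exact: (fg_P u P_u).1.
    by have := g_gt0 u Q_u nP_u; rewrite g_u ltxx.
have [n gt_k] := eventually_gtr_nat k; exists n => K le_nK u Q_u nP_u.
have -> : F u + K%:R * Hh u - aff_eval (aF + K%:R *: aH) (bF + K%:R * bH) u =
    (f u + k * g u) + (K%:R - k) * g u.
  by rewrite aff_evalDZ f_Q // g_Q //; ring.
by rewrite ltr_wpDl ?f_kg_ge0 // mulr_gt0 ?g_gt0 // subr_gt0 gt_k.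
Qed.

Lemma eventually_strict_support P : P \in S ->
  eventually (fun K => exists (a : pt) (b : R),
    (forall u, poly_set P u -> F u + K%:R * Hh u = aff_eval a b u) /\
    (forall Q, Q \in S -> (forall u : pt, poly_set P u -> poly_set Q u) ->
       forall u, poly_set Q u -> ~ poly_set P u ->
       0 < F u + K%:R * Hh u - aff_eval a b u)).
Proof.
move=> S_P; have [aH [bH [Hh_P Hh_gt]]] := Hh_sc.2 P S_P.
have [aF [bF F_P]] := F_fa S_P.
have [n ev_n] : eventually (fun K => forall Q, Q \in S ->
    (forall u : pt, poly_set P u -> poly_set Q u) ->
    forall u, poly_set Q u -> ~ poly_set P u ->
    0 < F u + K%:R * Hh u - aff_eval (aF + K%:R *: aH) (bF + K%:R * bH) u).
  apply: eventually_all_in => Q S_Q.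
  have [sub_PQ | not_sub_PQ] := classic (forall u : pt, poly_set P u -> poly_set Q u).
    have [n ev_n] := eventually_strict_support_pair S_P S_Q sub_PQ F_P Hh_P
      (Hh_gt Q S_Q sub_PQ).
    by exists n => K le_nK _; apply: ev_n.
  by exists 0%N => K _ sub_PQ; case: not_sub_PQ.
exists n => K le_nK; exists (aF + K%:R *: aH), (bF + K%:R * bH); split; last exact: ev_n.
by move=> u P_u; rewrite aff_evalDZ F_P // Hh_P.
Qed.

Lemma eventually_strictly_convex_addMn :
  eventually (fun K => strictly_convex S (fun u => F u + K%:R * Hh u)).
Proof.
have [n ev_n] := eventually_all_in eventually_strict_support.
exists n => K le_nK; split=> [P S_P | ]; last by move=> P S_P; apply: ev_n.
by have [a [b [FH_P _]]] := ev_n K le_nK P S_P; exists a, b.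
Qed.

End StrictConvexity.

Section RatFunctions.
Variables (R : realType) (N : nat).
Local Notation pt := (pt R N).

Lemma facewise_affine0 (S : complex N) : facewise_affine S (fun _ : pt => 0).
Proof.
move=> P _; exists 0, 0 => u _; rewrite /aff_eval big1 ?addr0 // => i _.
by rewrite mxE mul0r.
Qed.

Lemma in_Rat0 (S : complex N) : in_Rat S (fun _ : pt => 0).
Proof.
split=> [P _ | //].
exists (0, 0) => u _; rewrite /iaff_eval big1 ?rmorph0 ?addr0 // => i _.
by rewrite mxE mul0r.
Qed.

Lemma iaff_eval_addMn (L1 L2 : iaff N) (K : nat) (u : pt) :
  iaff_eval (L1.1 + K%:R *: L2.1, L1.2 + K%:R * L2.2) u =
  iaff_eval L1 u + K%:R * iaff_eval L2 u.
Proof.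
rewrite /iaff_eval /= (eq_bigr (fun i =>
  (L1.1 0 i)%:~R * u 0 i + K%:R * ((L2.1 0 i)%:~R * u 0 i))); last first.
  by move=> i _; rewrite !mxE intrD intrM mulrz_nat; ring.
by rewrite big_split /= -mulr_sumr rmorphD rmorphM /= ratr_nat; ring.
Qed.

Lemma in_Rat_addMn (S : complex N) (G1 G2 : pt -> R) (K : nat) :
  in_Rat S G1 -> in_Rat S G2 -> in_Rat S (fun u => G1 u + K%:R * G2 u).
Proof.
move=> [G1_iaff G1_slopes] [G2_iaff G2_slopes].
split=> [P S_P | P Q S_P S_Q P1 Q1 p q v rP rQ].
  have [L1 G1_P] := G1_iaff P S_P; have [L2 G2_P] := G2_iaff P S_P.
  by exists (L1.1 + K%:R *: L2.1, L1.2 + K%:R * L2.2) => u P_u;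
    rewrite iaff_eval_addMn -G1_P // -G2_P.
have slope1 := G1_slopes P Q S_P S_Q P1 Q1 p q v rP rQ.
have slope2 := G2_slopes P Q S_P S_Q P1 Q1 p q v rP rQ.
have split_slope (a b c d : R) :
  a + K%:R * b - (c + K%:R * d) = (a - c) + K%:R * (b - d) by ring.
by rewrite !split_slope slope1 slope2.
Qed.

Lemma in_Rat_subcomplex (S S' : complex N) (G : pt -> R) :
  subcomplex R S' S -> in_Rat S G -> in_Rat S' G.
Proof.
move=> [_ cells_S'] [G_iaff G_slopes]; split=> [P' S'_P' | P' Q' S'_P' S'_Q'].
  have [P S_P eq_P] := cells_S' P' S'_P'; have [L G_P] := G_iaff P S_P.
  by exists L => u P'_u; apply: G_P; apply/eq_P.
have [P S_P eq_P] := cells_S' P' S'_P'; have [Q S_Q eq_Q] := cells_S' Q' S'_Q'.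
move=> [p1 [w line_P]] [q1 [w' line_Q]] p q v [v_neq0 ray_P] [_ ray_Q].
apply: (G_slopes P Q S_P S_Q).
- by exists p1, w => u /eq_P /line_P.
- by exists q1, w' => u /eq_Q /line_Q.
- by split=> // t t_ge0; apply/eq_P/ray_P.
- by split=> // t t_ge0; apply/eq_Q/ray_Q.
Qed.

End RatFunctions.

Theorem proposition5p3 (R : realType) (N : nat) (S S' : complex N) :
  is_complex R S -> full_support R S ->
  (exists Hh : pt R N -> R, in_Rat S Hh /\ strictly_convex S Hh) ->
  subcomplex R S' S ->
  forall F : pt R N -> R, facewise_affine S F ->
    (exists H1 H2 : pt R N -> R,
        [/\ strictly_convex S H1, strictly_convex S H2 &
            forall u, F u = H1 u - H2 u]) /\
    (in_Rat S' F ->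
     exists H1 H2 : pt R N -> R,
        [/\ strictly_convex S H1, strictly_convex S H2,
            in_Rat S' H1, in_Rat S' H2 &
            forall u, F u = H1 u - H2 u]).
Proof.
move=> [cells_nonempty _ _] _ [Hh [Hh_rat Hh_sc]] sub_S' F F_fa.
have [n ev_n] := eventually_and
  (eventually_strictly_convex_addMn cells_nonempty Hh_sc F_fa)
  (eventually_strictly_convex_addMn cells_nonempty Hh_sc (@facewise_affine0 R N S)).
have [H1_sc H2_sc] := ev_n n (leqnn n).
have F_diff u : F u = (F u + n%:R * Hh u) - (0 + n%:R * Hh u) by rewrite add0r addrK.
have Hh_rat_S' := in_Rat_subcomplex sub_S' Hh_rat.
split=> [|F_rat];
  exists (fun u => F u + n%:R * Hh u), (fun u => 0 + n%:R * Hh u); split=> //.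
  exact: in_Rat_addMn.
exact: in_Rat_addMn (@in_Rat0 R N S') Hh_rat_S'.
Qed.
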